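(* Let $R=R_1\times\dots\times R_w$ be a finite principal ideal ring, with $R_1,\dots,R_w$ finite chain rings, and let $C=C_1\times\dots\times C_w\subseteq R^n\cong R_1^n\times\dots\times R_w^n$ be an $R$-linear code, $C_i=\pi_i(C)$ nonzero. Let $r\ge1$ and suppose that for every $i$ the code $C_i$ has locality $r$, rank $K_i$ over $R_i$, and minimum distance $\mathrm d(C_i)=n-K_i-\lceil K_i/r\rceil+2$ (i.e. $C_i$ meets the LRC bound). Then, with $K$ the rank of $C$ over $R$, $$\mathrm d(C)=n-K-\left\lceil\frac{K}{r}\right\rceil+2 .$$
   Context: The rank of a linear code $D$ over a ring $S$ is the minimum $K$ such that there is an $S$-module monomorphism $D\to S^K$. A coordinate $i$ of a code $D$ has locality $r$ if there is $S_i\subseteq\{1,\dots,n\}\setminus\{i\}$ with $|S_i|\le r$ and $|D_{S_i}|=|D_{S_i\cup\{i\}}|$, where $D_S$ is the code punctured to the coordinates in $S$; $D$ has locality $r$ if every coordinate does. $\mathrm d$ denotes minimum Hamming distance. A finite chain ring is a finite commutative local ring whose ideals are totally ordered by inclusion. *)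

From HB Require Import structures.
From mathcomp Require Import all_boot all_order all_algebra.
Set Implicit Arguments. Unset Strict Implicit. Unset Printing Implicit Defensive.
Import Order.TTheory GRing.Theory Num.Theory.
Local Open Scope ring_scope.

Section Defs.
Variable S : finComNzRingType.

Definition is_ideal (I : {set S}) : Prop :=
  [/\ 0 \in I, {in I &, forall x y, x + y \in I} & forall a, {in I, forall x, a * x \in I}].

Definition is_maximal_ideal (M : {set S}) : Prop :=
  [/\ is_ideal M, M != [set: S] &
      forall J, is_ideal J -> M \subset J -> J = M \/ J = [set: S]].

Definition is_local_ring : Prop :=
  exists M, is_maximal_ideal M /\ forall M', is_maximal_ideal M' -> M' = M.

Definition is_chain_ring : Prop :=
  is_local_ring /\
  forall I J, is_ideal I -> is_ideal J -> I \subset J \/ J \subset I.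

Variable n : nat.

Definition is_linear_code (D : {set 'rV[S]_n}) : Prop :=
  [/\ 0 \in D, {in D &, forall x y, x + y \in D} & forall a, {in D, forall x, a *: x \in D}].

Definition embeds_in (D : {set 'rV[S]_n}) (K : nat) : Prop :=
  exists f : 'rV[S]_n -> 'rV[S]_K,
    [/\ {in D &, forall x y, f (x + y) = f x + f y},
        forall a, {in D, forall x, f (a *: x) = a *: f x} &
        {in D &, injective f}].

Definition is_rank (D : {set 'rV[S]_n}) (K : nat) : Prop :=
  embeds_in D K /\ forall K', embeds_in D K' -> (K <= K')%N.

(* punctured code D_T, encoded by zeroing coordinates outside T
   (in bijection with the restrictions of codewords to T) *)
Definition puncture (D : {set 'rV[S]_n}) (T : {set 'I_n}) : {set 'rV[S]_n} :=
  [set \row_j (if j \in T then (x : 'rV[S]_n) 0 j else 0) | x in D].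

Definition coord_locality (D : {set 'rV[S]_n}) (r : nat) (i : 'I_n) : Prop :=
  exists T : {set 'I_n}, [/\ i \notin T, (#|T| <= r)%N &
                             #|puncture D T| = #|puncture D (i |: T)| ].

Definition has_locality (D : {set 'rV[S]_n}) (r : nat) : Prop :=
  forall i, coord_locality D r i.

Definition hamming (x y : 'rV[S]_n) : nat := #|[set j : 'I_n | x 0 j != y 0 j]|.

(* minimum Hamming distance (the default n is only reached for codes with
   fewer than two words, which never occurs below) *)
Definition dmin (D : {set 'rV[S]_n}) : nat :=
  \big[minn/n]_(x in D) \big[minn/n]_(y in D | x != y) hamming x y.

End Defs.

Definition ceil_div (a b : nat) : nat := ((a + b.-1) %/ b)%N.

Definition proj_code (R T : finComNzRingType) (f : {rmorphism R -> T}) (n : nat)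
  (C : {set 'rV[R]_n}) : {set 'rV[T]_n} := [set map_mx f x | x in C].

From HB Require Import structures.
From mathcomp Require Import all_boot all_order all_algebra.
From mathcomp Require Import zify.
From Stdlib Require Import ClassicalEpsilon.
Import GRing.Theory.
Local Open Scope ring_scope.
Set Implicit Arguments. Unset Strict Implicit.

(* By the Chinese remainder decomposition R = R_1 x ... x R_w, two codewords of
   C differ exactly where one of their components differs, so
   d(C) = min_i d(C_i); and an embedding of C into R^k is the same thing as
   embeddings of every C_i into R_i^k, so rank C = max_i K_i.  The LRC bound
   n - K - ceil(K/r) + 2 is antitone in K, hence the minimum of the d(C_i) is
   attained at an index maximizing K_i, where it equals the bound for rank C.
   Neither the chain ring structure of the R_i, the locality of the C_i nor
   r > 0 enters this argument. *)

Lemma hamming_map_mx (S T : finComNzRingType) (f : S -> T) n (x y : 'rV[S]_n) :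
  (hamming (map_mx f x) (map_mx f y) <= hamming x y)%N.
Proof.
apply: subset_leq_card; apply/subsetP => k; rewrite !inE !mxE.
by apply: contra => /eqP ->.
Qed.

Lemma bigmin_leq_cond (I : eqType) (r : seq I) (P : pred I) (F : I -> nat) m j :
  j \in r -> P j -> (\big[minn/m]_(i <- r | P i) F i <= F j)%N.
Proof.
elim: r => // a r IH; rewrite inE big_cons => /orP[/eqP<- ->|jr Pj].
  exact: geq_minl.
by case: (P a); rewrite ?geq_min IH ?orbT.
Qed.

Section Codes.
Variables (S : finComNzRingType) (n : nat).
Implicit Types (D : {set 'rV[S]_n}) (x y : 'rV[S]_n).

Lemma dmin_leq_hamming D x y :
  x \in D -> y \in D -> x != y -> (dmin D <= hamming x y)%N.
Proof.
move=> xD yD xy; apply: leq_trans (bigmin_leq_cond _ _ (mem_index_enum x) xD) _.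
by apply: bigmin_leq_cond; rewrite ?mem_index_enum //= yD.
Qed.

Lemma dmin_ind D (P : nat -> Prop) :
  P n -> (forall a b, P a -> P b -> P (minn a b)) ->
  (forall x y, x \in D -> y \in D -> x != y -> P (hamming x y)) -> P (dmin D).
Proof.
move=> Pn Pmin PH; apply: (big_ind P) => // x xD.
by apply: (big_ind P) => // y /andP[yD xy]; apply: PH.
Qed.

Lemma dmin_leq_length D : (dmin D <= n)%N.
Proof.
apply: (dmin_ind (P := fun d => d <= n)%N) => // [a b an _|x y _ _ _].
  by rewrite geq_min an.
by apply: leq_trans (max_card _) _; rewrite card_ord.
Qed.

Lemma embeds_in_leq D k m : (k <= m)%N -> embeds_in D k -> embeds_in D m.
Proof.
move=> km [f [fD fZ finj]].
pose pad (v : 'rV[S]_k) : 'rV[S]_m :=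
  \row_j (if insub (nat_of_ord j) is Some j' then v 0 j' else 0).
exists (pad \o f); split.
- move=> x y xD yD; apply/rowP => j; rewrite !mxE.
  by case: insub => [j'|]; rewrite ?fD ?mxE ?addr0.
- move=> a x xD; apply/rowP => j; rewrite !mxE.
  by case: insub => [j'|]; rewrite ?fZ ?mxE ?mulr0.
- move=> x y xD yD /rowP E; apply: finj => //; apply/rowP => j'.
  move: (E (widen_ord km j')); rewrite !mxE /=.
  by case: insubP => [j'' _ /val_inj -> //|]; rewrite ltn_ord.
Qed.

End Codes.

Section ChineseRemainder.
Variables (R : finComNzRingType) (w : nat) (Rs : 'I_w -> finComNzRingType)
  (pi : forall i : 'I_w, {rmorphism R -> Rs i}).
Hypothesis pi_inj : forall x y : R, (forall i, pi i x = pi i y) -> x = y.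
Hypothesis pi_surj : forall y : (forall i, Rs i), exists x : R, forall i, pi i x = y i.

Lemma crt_index_gt0 : (0 < w)%N.
Proof.
rewrite lt0n; apply: contraNN (oner_neq0 R) => /eqP w0; apply/eqP.
by apply: pi_inj => i; have := ltn_ord i; move: (nat_of_ord i) => k; rewrite w0.
Qed.

Lemma crt_lift_exists (y : forall i, Rs i) : exists x, [forall i, pi i x == y i].
Proof. by have [x xy] := pi_surj y; exists x; apply/forallP => i; rewrite xy. Qed.

Definition crt_lift (y : forall i, Rs i) : R := xchoose (crt_lift_exists y).

Lemma crt_liftP y i : pi i (crt_lift y) = y i.
Proof. by apply/eqP; move/forallP: (xchooseP (crt_lift_exists y)). Qed.

Lemma pi_onto i (a : Rs i) : exists x, pi i x = a.
Proof.
exists (crt_lift (dfwith (fun j => 0 : Rs j) a)).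
by rewrite crt_liftP dfwith_in.
Qed.

Definition crt_idem (i : 'I_w) : R := crt_lift (fun j => if j == i then 1 else 0).

Lemma pi_idemM i j x : pi j (crt_idem i * x) = if j == i then pi j x else 0.
Proof. by rewrite rmorphM crt_liftP; case: ifP; rewrite ?mul1r ?mul0r. Qed.

Section Rows.
Variable m : nat.
Implicit Types (u v : 'rV[R]_m).

Lemma map_pi_idemZ i u : map_mx (pi i) (crt_idem i *: u) = map_mx (pi i) u.
Proof. by apply/rowP => k; rewrite !mxE pi_idemM eqxx. Qed.

Lemma eq_map_pi i u v :
  (map_mx (pi i) u == map_mx (pi i) v) = (crt_idem i *: u == crt_idem i *: v).
Proof.
apply/eqP/eqP => [/rowP E|E]; last by rewrite -map_pi_idemZ E map_pi_idemZ.
apply/rowP => k; apply: pi_inj => j; rewrite !mxE !pi_idemM.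
by case: eqP => // ->; move: (E k); rewrite !mxE.
Qed.

Lemma hamming_idemZ i u v :
  (hamming (crt_idem i *: u) (crt_idem i *: v)
     <= hamming (map_mx (pi i) u) (map_mx (pi i) v))%N.
Proof.
apply: subset_leq_card; apply/subsetP => k; rewrite !inE !mxE.
apply: contra => /eqP E; apply/eqP; apply: pi_inj => j; rewrite !pi_idemM.
by case: eqP => // ->.
Qed.

End Rows.

Variables (n : nat) (C : {set 'rV[R]_n}).
Hypothesis C_linear : is_linear_code C.

Lemma idemZ_code i x : x \in C -> crt_idem i *: x \in C.
Proof. by case: C_linear => _ _; apply. Qed.

Lemma dmin_leq_proj i : (dmin C <= dmin (proj_code (pi i) C))%N.
Proof.
apply: (dmin_ind (P := fun d => dmin C <= d)%N) => [|a b|].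
- exact: dmin_leq_length.
- by move=> ha hb; rewrite leq_min ha hb.
move=> _ _ /imsetP[x xC ->] /imsetP[y yC ->]; rewrite eq_map_pi => xy.
apply: leq_trans (hamming_idemZ i x y).
by apply: dmin_leq_hamming; rewrite ?idemZ_code.
Qed.

Lemma exists_proj_dmin_leq : exists j, (dmin (proj_code (pi j) C) <= dmin C)%N.
Proof.
apply: (dmin_ind (P := fun d => exists j, dmin (proj_code (pi j) C) <= d)%N).
- by exists (Ordinal crt_index_gt0); apply: dmin_leq_length.
- by move=> a b [j ha] [j' hb]; case: (leqP a b) => _; [exists j | exists j'].
move=> x y xC yC xy.
have [j xy_j] : exists j, map_mx (pi j) x != map_mx (pi j) y.
  apply/existsP; apply: contraR xy => /existsPn same.
  apply/eqP/rowP => k; apply: pi_inj => j.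
  by move/negbNE/eqP/rowP/(_ k): (same j); rewrite !mxE.
exists j; apply: leq_trans (hamming_map_mx (pi j) x y).
by apply: dmin_leq_hamming; rewrite ?imset_f.
Qed.

(* Linear maps commute with the idempotents, hence respect the kernel of pi i. *)
Lemma eq_map_pi_embed k (f : 'rV[R]_n -> 'rV[R]_k) i x y :
  (forall a, {in C, forall z, f (a *: z) = a *: f z}) -> {in C &, injective f} ->
  x \in C -> y \in C ->
  (map_mx (pi i) (f x) == map_mx (pi i) (f y)) = (map_mx (pi i) x == map_mx (pi i) y).
Proof.
move=> fZ finj xC yC; rewrite !eq_map_pi -!fZ //.
by apply/eqP/eqP => [|-> //]; apply: finj; rewrite idemZ_code.
Qed.

Lemma embeds_proj i k : embeds_in C k -> embeds_in (proj_code (pi i) C) k.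
Proof.
have [_ CD CZ] := C_linear; case=> f [fD fZ finj].
pose sec u := odflt 0 [pick x in C | map_mx (pi i) x == u].
have secP u : u \in proj_code (pi i) C -> sec u \in C /\ map_mx (pi i) (sec u) = u.
  case/imsetP=> x xC ->; rewrite /sec; case: pickP => [y /andP[yC /eqP -> //]|].
  by move/(_ x); rewrite xC eqxx.
have f_sec x u : x \in C -> u \in proj_code (pi i) C -> map_mx (pi i) x = u ->
    map_mx (pi i) (f (sec u)) = map_mx (pi i) (f x).
  move=> xC uC xu; have [sC su] := secP u uC.
  by apply/eqP; rewrite eq_map_pi_embed // su xu.
exists (fun u => map_mx (pi i) (f (sec u))); split.
- move=> u v uC vC /=; have [xC xu] := secP u uC; have [yC yv] := secP v vC.
  rewrite (f_sec (sec u + sec v)) ?CD //; last by rewrite map_mxD xu yv.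
  + by rewrite fD // map_mxD.
  + by rewrite -xu -yv -map_mxD imset_f ?CD.
- move=> a u uC /=; have [b <-] := pi_onto a; have [xC xu] := secP u uC.
  rewrite (f_sec (b *: sec u)) ?CZ //; last by rewrite map_mxZ xu.
  + by rewrite fZ // map_mxZ.
  + by rewrite -xu -map_mxZ imset_f ?CZ.
- move=> u v uC vC E; have [xC xu] := secP u uC; have [yC yv] := secP v vC.
  by apply/eqP; rewrite -xu -yv -(eq_map_pi_embed i fZ finj) // E.
Qed.

Lemma embeds_of_proj k :
  (forall i, embeds_in (proj_code (pi i) C) k) -> embeds_in C k.
Proof.
move=> H; pose g i := proj1_sig (constructive_indefinite_description _ (H i)).
have gP i : _ := proj2_sig (constructive_indefinite_description _ (H i)).
exists (fun x => \row_j crt_lift (fun i => g i (map_mx (pi i) x) 0 j)); split.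
- move=> x y xC yC; apply/rowP => j; apply: pi_inj => i; have [gD _ _] := gP i.
  by rewrite !mxE rmorphD !crt_liftP /g map_mxD gD ?imset_f // mxE.
- move=> a x xC; apply/rowP => j; apply: pi_inj => i; have [_ gZ _] := gP i.
  by rewrite !mxE rmorphM !crt_liftP /g map_mxZ gZ ?imset_f // mxE.
- move=> x y xC yC /rowP E; apply/rowP => l; apply: pi_inj => i.
  have [_ _ gI] := gP i.
  have /rowP/(_ l) : map_mx (pi i) x = map_mx (pi i) y.
    apply: gI; rewrite ?imset_f //; apply/rowP => j.
    by move: (E j); rewrite !mxE => /(congr1 (pi i)); rewrite !crt_liftP.
  by rewrite !mxE.
Qed.

Lemma rank_code_eq_bigmax (K : 'I_w -> nat) KC :
  (forall i, is_rank (proj_code (pi i) C) (K i)) -> is_rank C KC ->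
  KC = \max_i K i.
Proof.
move=> rankCi [embC minC]; apply/eqP; rewrite eqn_leq; apply/andP; split.
  apply: minC; apply: embeds_of_proj => i.
  by apply: embeds_in_leq (leq_bigmax i) _; case: (rankCi i).
apply/bigmax_leqP => i _; case: (rankCi i) => _; apply.
exact: embeds_proj.
Qed.

End ChineseRemainder.

Definition lrc_bound (n K r : nat) : int := n%:Z - K%:Z - (ceil_div K r)%:Z + 2.

Lemma lrc_bound_antitone n r K1 K2 :
  (K1 <= K2)%N -> (lrc_bound n K2 r <= lrc_bound n K1 r)%R.
Proof.
move=> K12; have : (ceil_div K1 r <= ceil_div K2 r)%N.
  by rewrite leq_div2r // leq_add2r.
rewrite /lrc_bound; lia.
Qed.

Unset Implicit Arguments. Set Strict Implicit.

Theorem mainTheorem5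
  (R : finComNzRingType) (w : nat) (Rs : 'I_w -> finComNzRingType)
  (pi : forall i : 'I_w, {rmorphism R -> Rs i})
  (Hchain : forall i, is_chain_ring (Rs i))
  (Hinj : forall x y : R, (forall i, pi i x = pi i y) -> x = y)
  (Hsurj : forall y : (forall i, Rs i), exists x : R, forall i, pi i x = y i)
  (n : nat) (C : {set 'rV[R]_n}) (HC : is_linear_code C)
  (r : nat) (hr : (0 < r)%N) (K : 'I_w -> nat)
  (Hcomp : forall i : 'I_w,
     [/\ proj_code (pi i) C != [set 0],
         has_locality (proj_code (pi i) C) r,
         is_rank (proj_code (pi i) C) (K i) &
         (dmin (proj_code (pi i) C))%:Z
           = n%:Z - (K i)%:Z - (ceil_div (K i) r)%:Z + 2]) :
  forall KC : nat, is_rank C KC ->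
    (dmin C)%:Z = n%:Z - KC%:Z - (ceil_div KC r)%:Z + 2.
Proof.
move=> KC rankC.
have rankCi i : is_rank (proj_code (pi i) C) (K i) by case: (Hcomp i).
have dCi i : (dmin (proj_code (pi i) C))%:Z = lrc_bound n (K i) r.
  by case: (Hcomp i).
have I_w_gt0 : (0 < #|'I_w|)%N by rewrite card_ord; apply: crt_index_gt0 Hinj.
have [i0 Ki0] := eq_bigmax K I_w_gt0.
have -> : KC = K i0 by rewrite -Ki0; apply: rank_code_eq_bigmax rankCi rankC.
have dC_i0 := dmin_leq_proj Hinj Hsurj HC i0.
have [j dj_C] := exists_proj_dmin_leq Hinj C.
have K_j : (K j <= K i0)%N by rewrite -Ki0 leq_bigmax.
move: (dCi i0) (dCi j) (lrc_bound_antitone n r K_j); rewrite /lrc_bound; lia.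
Qed.
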